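(* Let $K \ge 2$, $n \ge 1$, $\Sigma = \{1,\ldots,K\}^n$, and let $\Pr(\cdot \mid A)$ be a probability distribution on $\Sigma$ (the posterior of the labels given data $A$), invariant under relabelling, i.e. $\Pr(\phi(\sigma)\mid A) = \Pr(\sigma \mid A)$ for every permutation $\phi$ of $\{1,\ldots,K\}$, where $(\phi(\sigma))_i = \phi(\sigma_i)$. Let $\rho:\Sigma\to\Sigma$ be the canonical remapping and $\Pr^*(\cdot\mid A)$ the induced posterior on $\Sigma^* = \{\sigma \in \Sigma : \rho(\sigma) = \sigma\}$, i.e. $\Pr^*(\sigma \mid A) = \sum_{\sigma' \in \Sigma:\, \rho(\sigma') = \sigma} \Pr(\sigma' \mid A)$. Define the remapped centroid estimator \[ \hat\sigma_C = \rho\Big( \operatorname*{arg\,min}_{\tilde\sigma \in \Sigma} \mathbb{E}_{\sigma \mid A}\big[ H(\tilde\sigma, \rho(\sigma)) \big] \Big), \qquad H(\tilde\sigma,\sigma) = \sum_{i=1}^n I(\tilde\sigma_i \ne \sigma_i), \] and let $\hat\sigma^* \in \Sigma$ be given by $(\hat\sigma^* )_i = \operatorname*{arg\,max}_{k \in \{1,\ldots,K\}} \Pr^*(\sigma_i = k \mid A)$ for $i = 1,\ldots,n$. Then $\hat\sigma^*$ minimizes $\tilde\sigma \mapsto \mathbb{E}_{\sigma\mid A}[H(\tilde\sigma,\rho(\sigma))]$ over $\Sigma$, and hence $\hat\sigma_C = \rho(\hat\sigma^* )$ (the centroid estimator is a mapped consensus estimator).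
   Context: Canonical remapping: for $\sigma \in \Sigma$, $\rho(\sigma)$ is obtained by relabelling the labels in order of first appearance along $\sigma_1,\sigma_2,\ldots,\sigma_n$: the label of $\sigma_1$ becomes $1$, the next new label encountered becomes $2$, and so on (e.g. $\sigma=(2,2,3,1,3,4,2,1)$ maps to $(1,1,2,3,2,4,1,3)$). Formally, with $\mathrm{ind}(\sigma)_k = \min\{i:\sigma_i = k\}$ and $\mathrm{ord}(\sigma)_k = \sigma\big[\mathrm{ind}(\sigma)_{(k)}\big]$ (the $k$-th label to appear), $\rho(\sigma) = \mathrm{ord}(\sigma)^{-1}(\sigma)$. $\Pr^*(\sigma_i = k \mid A)$ denotes the marginal probability under $\Pr^*$. $I(\cdot)$ is the indicator function. *)

(* Labels {1..K} are represented by 'I_K = {0..K-1}. *)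
From mathcomp Require Import all_boot all_order all_algebra all_fingroup.
Set Implicit Arguments. Unset Strict Implicit. Unset Printing Implicit Defensive.
Import Order.TTheory GRing.Theory Num.Theory.
Local Open Scope ring_scope.

Definition labeling (n K : nat) := {ffun 'I_n -> 'I_K}.

Definition relabel n K (phi : {perm 'I_K}) (s : labeling n K) : labeling n K :=
  [ffun i => phi (s i)].

Definition appearance n K (s : labeling n K) : seq 'I_K :=
  undup [seq s i | i <- enum 'I_n].

(* canonical remapping: the label of s_i is replaced by its rank (0-based)
   in the order of first appearance.  The rank is always < K; the default
   in insubd is never used. *)
Definition rho n K (s : labeling n K) : labeling n K :=
  [ffun i => insubd (s i) (index (s i) (appearance s))].

Definition hamming n K (t s : labeling n K) : nat := #|[set i | t i != s i]|.

Definition Prstar (R : numDomainType) n K (P : labeling n K -> R)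
  (s : labeling n K) : R := \sum_(s' | rho s' == s) P s'.

Definition marg_star (R : numDomainType) n K (P : labeling n K -> R)
  (i : 'I_n) (k : 'I_K) : R :=
  \sum_(s | (rho s == s) && (s i == k)) Prstar P s.

Definition exp_loss (R : numDomainType) n K (P : labeling n K -> R)
  (t : labeling n K) : R :=
  \sum_(s : labeling n K) P s * (hamming t (rho s))%:R.

Definition argmin_loss (R : realDomainType) n K (P : labeling n K -> R)
  : {set labeling n K} :=
  [set t | [forall u, exp_loss P t <= exp_loss P u]].

From mathcomp Require Import all_boot all_order all_algebra all_fingroup.
Import Order.TTheory GRing.Theory Num.Theory.
Local Open Scope ring_scope.

(* The expected Hamming loss splits coordinatewise: coordinate i contributes
   the total mass minus the mass of the labelings whose remapping puts t i at
   position i.  Because rho is idempotent, that mass is exactly the marginal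
   Pr*(sigma_i = t i | A), so the loss is minimised by maximising every
   marginal separately. *)

Lemma undup_map_inj_in (T1 T2 : eqType) (f : T1 -> T2) (s : seq T1) :
  {in s &, injective f} -> undup (map f s) = map f (undup s).
Proof.
elim: s => [//|x s IHs] f_inj /=.
have f_inj_s : {in s &, injective f}.
  by move=> a b sa sb; apply: f_inj; rewrite inE ?sa ?sb orbT.
have -> : (f x \in map f s) = (x \in s).
  apply/mapP/idP => [[y sy fxy]|sx]; last by exists x.
  by rewrite (f_inj x y) ?inE ?eqxx ?sy ?orbT.
by case: ifP => _; rewrite /= IHs.
Qed.

Lemma index_map_inj_in (T1 T2 : eqType) (f : T1 -> T2) (s : seq T1) x :
  {in s &, injective f} -> x \in s -> index (f x) (map f s) = index x s.
Proof.
elim: s => [//|y s IHs] f_inj /= sx.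
have f_inj_s : {in s &, injective f}.
  by move=> a b sa sb; apply: f_inj; rewrite inE ?sa ?sb orbT.
have [->|yx] := eqVneq y x; first by rewrite eqxx.
have fyx : (f y == f x) = false.
  apply/negbTE/eqP => fyx; move/eqP: yx; apply.
  by apply: f_inj; rewrite // inE ?eqxx // sx.
by rewrite fyx IHs //; move: sx; rewrite inE eq_sym (negbTE yx).
Qed.

Section CanonicalRemapping.

Variables n K : nat.
Implicit Types s t : labeling n K.

Definition appearance_rank s (x : 'I_K) : 'I_K :=
  insubd x (index x (appearance s)).

Lemma rhoE s i : rho s i = appearance_rank s (s i).
Proof. by rewrite ffunE. Qed.

Lemma mem_appearance s i : s i \in appearance s.
Proof. by rewrite mem_undup; apply: map_f; rewrite mem_enum. Qed.

Lemma size_appearance s : (size (appearance s) <= K)%N.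
Proof.
rewrite -(card_uniqP (undup_uniq _)) -[X in (_ <= X)%N](card_ord K).
exact: max_card.
Qed.

Lemma val_appearance_rank s x : x \in appearance s ->
  val (appearance_rank s x) = index x (appearance s).
Proof.
move=> sx; rewrite val_insubd (leq_trans _ (size_appearance s)) //.
by rewrite index_mem.
Qed.

Lemma appearance_rank_inj s :
  {in appearance s &, injective (appearance_rank s)}.
Proof.
move=> x y sx sy rxy; apply: (index_inj x sx sy).
by rewrite -!val_appearance_rank // rxy.
Qed.

Lemma appearance_rho s :
  appearance (rho s) = map (appearance_rank s) (appearance s).
Proof.
rewrite /appearance -undup_map_inj_in; last first.
  by move=> x y sx sy; apply: appearance_rank_inj; rewrite mem_undup.
by rewrite -[in RHS]map_comp; congr undup; apply: eq_map => i; rewrite rhoE.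
Qed.

Lemma rho_idem s : rho (rho s) = rho s.
Proof.
apply/ffunP => i; apply: val_inj.
rewrite [in LHS]rhoE /appearance_rank val_insubd appearance_rho [rho s i]rhoE.
rewrite index_map_inj_in ?mem_appearance //; last exact: appearance_rank_inj.
by rewrite -val_appearance_rank ?mem_appearance // ltn_ord.
Qed.

End CanonicalRemapping.

Section ExpectedLoss.

Variables (R : numDomainType) (n K : nat) (P : labeling n K -> R).

Lemma marg_starE i k : marg_star P i k = \sum_(s | rho s i == k) P s.
Proof.
rewrite /marg_star /Prstar [RHS](partition_big (@rho n K)
   (fun s : labeling n K => (rho s == s) && (s i == k))) => [|s ski]; last first.
  by rewrite rho_idem eqxx ski.
apply: eq_bigr => s /andP[_ /eqP sik]; apply: eq_bigl => s'.
by have [->|] := eqVneq (rho s') s; rewrite ?andbT ?andbF // sik eqxx.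
Qed.

Lemma hammingE (t u : labeling n K) : hamming t u = (\sum_i (t i != u i))%N.
Proof.
by rewrite /hamming -sum1_card big_mkcond; apply: eq_bigr => i; rewrite inE.
Qed.

Lemma exp_lossE t :
  exp_loss P t = \sum_i (\sum_s P s - marg_star P i (t i)).
Proof.
rewrite /exp_loss; under eq_bigr do rewrite hammingE natr_sum mulr_sumr.
rewrite exchange_big; apply: eq_bigr => i _.
rewrite marg_starE [\sum_s P s](bigID (fun s => rho s i == t i)) /=.
rewrite addrC addrK [RHS]big_mkcond; apply: eq_bigr => s _.
by rewrite [t i == _]eq_sym; case: (_ != _); rewrite ?mulr0 ?mulr1.
Qed.

Lemma exp_loss_min_argmax_marg (shat : labeling n K) :
  (forall i k, marg_star P i k <= marg_star P i (shat i)) ->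
  forall t, exp_loss P shat <= exp_loss P t.
Proof.
by move=> shat_max t; rewrite !exp_lossE; apply: ler_sum => i _; rewrite lerB.
Qed.

End ExpectedLoss.

Theorem theorem2 (R : realFieldType) (n K : nat) (hK : (2 <= K)%N) (hn : (1 <= n)%N)
  (P : labeling n K -> R)
  (P_ge0 : forall s, 0 <= P s)
  (P_sum1 : \sum_(s : labeling n K) P s = 1)
  (P_inv : forall (phi : {perm 'I_K}) s, P (relabel phi s) = P s)
  (shat : labeling n K)
  (shat_argmax : forall (i : 'I_n) (k : 'I_K),
      marg_star P i k <= marg_star P i (shat i)) :
  (forall t : labeling n K, exp_loss P shat <= exp_loss P t)
  /\ rho shat \in [set rho t | t in argmin_loss P].
Proof.
have shat_min t : exp_loss P shat <= exp_loss P t.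
  exact: exp_loss_min_argmax_marg.
split=> //; apply/imsetP; exists shat => //.
by rewrite inE; apply/forallP.
Qed.
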